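(* Let $q$ be a prime power and $\eta\ge0$ an integer. Let $\Delta^*=\bigcup_{(\delta_T,\delta_X)}\Delta^*(\delta_T,\delta_X)$, the union over $(\delta_T,\delta_X)\in\mathbb{Z}\times\mathbb{N}$ with $\delta_T+\eta\delta_X\ge0$. Then $\Delta^*$ is exactly the set of monomials of $R$ that are not divisible by the leading term of any polynomial of $\mathcal{G}$.
   Context: $R=\mathbb{F}_q[T_1,T_2,X_1,X_2]$; the bidegree of $T_1^{c_1}T_2^{c_2}X_1^{d_1}X_2^{d_2}$ is $(c_1+c_2-\eta d_1,d_1+d_2)$; $R(\delta_T,\delta_X)$ is the span of monomials of that bidegree, $\mathcal{M}(\delta_T,\delta_X)$ the set of these monomials; $\delta=\delta_T+\eta\delta_X$. Leading terms are taken for the monomial order: $T_1^{c'_1}T_2^{c'_2}X_1^{d'_1}X_2^{d'_2}<T_1^{c_1}T_2^{c_2}X_1^{d_1}X_2^{d_2}$ iff $d'_1+d'_2<d_1+d_2$, or ($d'_1+d'_2=d_1+d_2$ and $d'_2<d_2$), or ($d'_1=d_1,d'_2=d_2,c'_2<c_2$), or ($d'_1=d_1,d'_2=d_2,c'_2=c_2,c'_1<c_1$). For $\delta\ge0$: $\mathcal{P}=\{(a,b)\in\mathbb{N}^2:a\le\delta_X,\eta a+b\le\delta\}$; $M(d_2,c_2)=T_1^{\delta-\eta d_2-c_2}T_2^{c_2}X_1^{\delta_X-d_2}X_2^{d_2}$; $A=\delta_X$ if $\delta_T\ge0$, $A=\delta/\eta$ if $\delta_T<0$; $\mathcal{A}_X=\{\alpha\in\mathbb{N}:\alpha\le\min(\lfloor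 A\rfloor,q-1)\}\cup(\{A\}\cap\mathbb{N})$; $\mathcal{K}=\{(\alpha,\beta)\in\mathbb{N}^2:\alpha\in\mathcal{A}_X,\beta\le\min(\delta-\eta\alpha,q)-1\text{ or }\beta=\delta-\eta\alpha\}$; (H): $\eta\ge2$, $\delta_T<0$, $\eta\mid\delta_T$, $q\le\delta_X+\delta_T/\eta$; $\mathcal{K}^*=\mathcal{K}\setminus\{(\delta/\eta,0)\}$ if (H), else $\mathcal{K}$; $\Delta^*(\delta_T,\delta_X)=\{M(\alpha,\beta):(\alpha,\beta)\in\mathcal{K}^*\}$. $p(d_2,c_2)=(d'_2,c'_2)$ with $d'_2=d_2$ if $d_2\in\{0,A\}$, else $d'_2\in\{1,\dots,q-1\}$, $d'_2\equiv d_2\pmod{q-1}$; $c'_2=0$ if $c_2=0$; $c'_2=\delta-\eta d'_2$ if $c_2=\delta-\eta d_2$; else $c'_2\in\{1,\dots,q-1\}$, $c'_2\equiv c_2\pmod{q-1}$. Linear $\pi_{(\delta_T,\delta_X)}(M(d_2,c_2))=M(p(d_2,c_2))$, except if (H) and $(d_2,c_2)=(\delta/\eta,0)$: with $\delta/\eta=k(q-1)+r$, $r\in\{1,\dots,q-1\}$, $\pi(M(\delta/\eta,0))=M(r,0)+M(r,\eta k(q-1))-M(r,q-1)$. $\mathcal{G}$ is the union over all $(\delta_T,\delta_X)\in\mathbb{Z}\times\mathbb{N}$ with $\delta\ge0$ of $\{M-\pi_{(\delta_T,\delta_X)}(M):M\in\mathcal{M}(\delta_T,\delta_X)\setminus\Delta^*(\delta_T,\delta_X)\}$.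 *)

From HB Require Import structures.
From mathcomp Require Import all_boot all_order all_algebra.
From mathcomp Require Import mpoly.
Set Implicit Arguments.
Unset Strict Implicit.
Unset Printing Implicit Defensive.
Import Order.TTheory GRing.Theory Num.Theory.
Local Open Scope ring_scope.

(* Monomials of R = F_q[T1,T2,X1,X2] are multinomials 'X_{1..4};
   variable indices: 0 = T1, 1 = T2, 2 = X1, 3 = X2. *)
Definition mon (c1 c2 d1 d2 : nat) : 'X_{1..4} :=
  [multinom nth 0%N [:: c1; c2; d1; d2] i | i < 4].

Definition eT1 (m : 'X_{1..4}) : nat := m (inord 0).
Definition eT2 (m : 'X_{1..4}) : nat := m (inord 1).
Definition eX1 (m : 'X_{1..4}) : nat := m (inord 2).
Definition eX2 (m : 'X_{1..4}) : nat := m (inord 3).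

Section Defs.
Variables (q eta : nat).

Definition bideg (m : 'X_{1..4}) : int * nat :=
  ((eT1 m)%:Z + (eT2 m)%:Z - (eta * eX1 m)%N%:Z, (eX1 m + eX2 m)%N).

Definition inMon (dT : int) (dX : nat) (m : 'X_{1..4}) : bool :=
  bideg m == (dT, dX).

(* delta = dT + eta * dX (an integer), and its value as a natural number
   (used only when delta >= 0) *)
Definition delta (dT : int) (dX : nat) : int := dT + (eta * dX)%N%:Z.
Definition deltan (dT : int) (dX : nat) : nat := `|delta dT dX|%N.

Definition inP (dT : int) (dX : nat) (a b : nat) : bool :=
  (a <= dX)%N && ((eta * a + b)%N%:Z <= delta dT dX).

Definition Mo (dT : int) (dX : nat) (d2 c2 : nat) : 'X_{1..4} :=
  mon (deltan dT dX - eta * d2 - c2) c2 (dX - d2) d2.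

Definition A (dT : int) (dX : nat) : rat :=
  if 0 <= dT then dX%:R else (delta dT dX)%:~R / eta%:R.

Definition inAX (dT : int) (dX : nat) (al : nat) : bool :=
  (al%:Z <= Num.min (Num.floor (A dT dX)) (q%:Z - 1)) || (al%:R == A dT dX).

Definition inK (dT : int) (dX : nat) (al be : nat) : bool :=
  inAX dT dX al &&
  ((be%:Z <= Num.min (delta dT dX - (eta * al)%N%:Z) q%:Z - 1)
   || (be%:Z == delta dT dX - (eta * al)%N%:Z)).

Definition condH (dT : int) (dX : nat) : bool :=
  [&& (2 <= eta)%N, dT < 0, (eta%:Z %| dT)%Z &
      q%:Z <= dX%:Z + (dT %/ eta%:Z)%Z].

(* (alpha, beta) \in \mathcal{K}^*; note delta/eta is an integer under (H) *)
Definition inKstar (dT : int) (dX : nat) (al be : nat) : bool :=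
  inK dT dX al be &&
  ~~ (condH dT dX && (al%:R == A dT dX) && (be == 0%N)).

Definition inDeltaStar (dT : int) (dX : nat) (m : 'X_{1..4}) : Prop :=
  exists al be : nat, inKstar dT dX al be /\ m = Mo dT dX al be.

(* the unique element of {1, ..., q-1} congruent to n (n >= 1) mod q-1 *)
Definition red (n : nat) : nat := ((n - 1) %% (q - 1)).+1.

Definition p_d (dT : int) (dX : nat) (d2 : nat) : nat :=
  if (d2 == 0%N) || (d2%:R == A dT dX) then d2 else red d2.

Definition p_c (dT : int) (dX : nat) (d2 c2 : nat) : nat :=
  if c2 == 0%N then 0%N
  else if c2%:Z == delta dT dX - (eta * d2)%N%:Z
       then (deltan dT dX - eta * p_d dT dX d2)%N
       else red c2.

Definition pi (F : finFieldType) (dT : int) (dX : nat) (d2 c2 : nat)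
  : {mpoly F[4]} :=
  let dl := deltan dT dX in
  if condH dT dX && (d2%:R == A dT dX) && (c2 == 0%N) then
    (* dl / eta = k (q-1) + r with r in {1, ..., q-1} *)
    let r := red (dl %/ eta) in
    let k := ((dl %/ eta - r) %/ (q - 1))%N in
    'X_[Mo dT dX r 0] + 'X_[Mo dT dX r (eta * k * (q - 1))]
      - 'X_[Mo dT dX r (q - 1)]
  else 'X_[Mo dT dX (p_d dT dX d2) (p_c dT dX d2 c2)].

Definition inG (F : finFieldType) (g : {mpoly F[4]}) : Prop :=
  exists (dT : int) (dX : nat) (m : 'X_{1..4}),
    [/\ 0 <= delta dT dX, inMon dT dX m, ~ inDeltaStar dT dX m &
        g = 'X_[m] - pi F dT dX (eX2 m) (eT2 m)].

End Defs.

Definition mlt (m' m : 'X_{1..4}) : bool :=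
  [|| (eX1 m' + eX2 m' < eX1 m + eX2 m)%N,
      (eX1 m' + eX2 m' == eX1 m + eX2 m)%N && (eX2 m' < eX2 m)%N,
      [&& eX1 m' == eX1 m, eX2 m' == eX2 m & (eT2 m' < eT2 m)%N] |
      [&& eX1 m' == eX1 m, eX2 m' == eX2 m, eT2 m' == eT2 m &
          (eT1 m' < eT1 m)%N]].

Definition is_lead (F : finFieldType) (g : {mpoly F[4]}) (l : 'X_{1..4})
  : Prop :=
  l \in msupp g /\ forall m', m' \in msupp g -> m' != l -> mlt m' l.

Definition mdivides (l m : 'X_{1..4}) : bool :=
  [forall i : 'I_4, (l i <= m i)%N].

(* Membership of a monomial m in Delta* only depends on its exponents: it is
   the set of [standard] monomials, which is closed under taking divisors.
   If m is not standard, pi lowers either the X2-exponent or, keeping it, the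
   T2-exponent of m, so every monomial of pi(m) is smaller than m and m is the
   leading monomial of m - pi(m), an element of G.  Thus the leading monomials
   of G are exactly the non-standard monomials, and divisor-closedness of the
   standard ones gives the equivalence. *)

From Pilot Require Import Defs.
From HB Require Import structures.
From mathcomp Require Import all_boot all_order all_algebra.
From mathcomp Require Import mpoly zify.
Import Order.TTheory GRing.Theory Num.Theory.
Local Open Scope ring_scope.
Set Implicit Arguments.
Unset Strict Implicit.

Lemma eT1_mon c1 c2 d1 d2 : eT1 (mon c1 c2 d1 d2) = c1.
Proof. by rewrite /eT1 mnmE inordK. Qed.
Lemma eT2_mon c1 c2 d1 d2 : eT2 (mon c1 c2 d1 d2) = c2.
Proof. by rewrite /eT2 mnmE inordK. Qed.
Lemma eX1_mon c1 c2 d1 d2 : eX1 (mon c1 c2 d1 d2) = d1.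
Proof. by rewrite /eX1 mnmE inordK. Qed.
Lemma eX2_mon c1 c2 d1 d2 : eX2 (mon c1 c2 d1 d2) = d2.
Proof. by rewrite /eX2 mnmE inordK. Qed.
Definition mon_exps := (eT1_mon, eT2_mon, eX1_mon, eX2_mon).

Lemma monE m : mon (eT1 m) (eT2 m) (eX1 m) (eX2 m) = m.
Proof.
apply/mnmP => -[[|[|[|[|i]]]] lti] //; rewrite mnmE /=;
  by congr (m _); apply/val_inj; rewrite /= inordK.
Qed.

Section DeltaStar.
Variables q eta : nat.

Lemma inMonE dT dX m : inMon eta dT dX m ->
  dT = (eT1 m)%:Z + (eT2 m)%:Z - (eta * eX1 m)%N%:Z /\ dX = (eX1 m + eX2 m)%N.
Proof. by case/eqP. Qed.

Lemma deltanE dT dX : 0 <= delta eta dT dX -> (deltan eta dT dX)%:Z = delta eta dT dX.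
Proof. rewrite /deltan; lia. Qed.

Lemma eta_gt0 dT dX : 0 <= delta eta dT dX -> dT < 0 -> (0 < eta)%N.
Proof. rewrite /delta; nia. Qed.

Lemma eqA_nat dT dX n : 0 <= delta eta dT dX ->
  (n%:R == A eta dT dX) =
  if 0 <= dT then n == dX else (eta * n == deltan eta dT dX)%N.
Proof.
move=> delta_ge0; rewrite /A; case: ifP => dT_ge0; first by rewrite eqr_nat.
have eta_pos : (0 < eta)%N by apply: (eta_gt0 delta_ge0); rewrite ltNge dT_ge0.
rewrite -[n%:R]divr1 eqr_div ?oner_neq0 ?pnatr_eq0 -?lt0n // mulr1.
by rewrite -(deltanE delta_ge0) -natrM eqr_nat mulnC.
Qed.

Lemma le_floorA dT dX n : 0 <= delta eta dT dX ->
  (n%:Z <= Num.floor (A eta dT dX)) =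
  if 0 <= dT then (n <= dX)%N else (eta * n <= deltan eta dT dX)%N.
Proof.
move=> delta_ge0; rewrite floor_ge_int /A; case: ifP => dT_ge0; first by rewrite ler_nat.
have eta_pos : (0 < eta)%N by apply: (eta_gt0 delta_ge0); rewrite ltNge dT_ge0.
by rewrite ler_pdivlMr ?ltr0n // -(deltanE delta_ge0) /= -natrM ler_nat mulnC.
Qed.

Lemma delta_inMon dT dX m : inMon eta dT dX m ->
  delta eta dT dX = (eT1 m + eT2 m + eta * eX2 m)%N.
Proof. by move=> /inMonE [-> ->]; rewrite /delta; lia. Qed.

Lemma eqA_inMon dT dX m : inMon eta dT dX m ->
  ((eX2 m)%:R == A eta dT dX) =
  (eX1 m == 0%N) || [&& eT1 m == 0%N, eT2 m == 0%N & (0 < eta * eX1 m)%N].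
Proof.
move=> mM; have deltaE := delta_inMon mM; have [dTE dXE] := inMonE mM.
rewrite eqA_nat ?deltaE // /deltan deltaE; case: ifP; lia.
Qed.

Lemma condH_A_inMon dT dX m : inMon eta dT dX m ->
  condH q eta dT dX && ((eX2 m)%:R == A eta dT dX) && (eT2 m == 0%N) =
  [&& (2 <= eta)%N, eT1 m == 0%N, eT2 m == 0%N, (0 < eX1 m)%N & (q <= eX2 m)%N].
Proof.
move=> mM; have [dTE dXE] := inMonE mM; rewrite eqA_inMon //.
case: (boolP [&& _, _ & _]) => [/and3P [/eqP eT1_0 /eqP eT2_0 eta_pos] | not_A].
  have -> : dT = - (eX1 m)%:Z * eta%:Z by rewrite dTE eT1_0 eT2_0; lia.
  rewrite /condH mulzK ?dvdz_mull //; lia.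
rewrite /condH dTE; lia.
Qed.

Definition standard (m : 'X_{1..4}) : bool :=
  [|| (eX2 m < q)%N, eX1 m == 0%N | [&& eta == 1%N, eT1 m == 0%N & eT2 m == 0%N]]
  && ((eT1 m == 0%N) || (eT2 m < q)%N).

Lemma inKstar_inMon dT dX m : inMon eta dT dX m ->
  inKstar q eta dT dX (eX2 m) (eT2 m) = standard m.
Proof.
move=> mM; have deltaE := delta_inMon mM; have [dTE dXE] := inMonE mM.
have delta_ge0 : 0 <= delta eta dT dX by rewrite deltaE.
rewrite /inKstar /inK /inAX -andbA condH_A_inMon // eqA_inMon // le_min.
rewrite le_floorA // /deltan deltaE /standard; case: ifP; lia.
Qed.

Lemma Mo_inMon dT dX m : inMon eta dT dX m -> Mo eta dT dX (eX2 m) (eT2 m) = m.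
Proof.
move=> mM; have deltaE := delta_inMon mM; have [_ dXE] := inMonE mM.
rewrite -[RHS]monE /Mo /deltan deltaE; congr mon; lia.
Qed.

Lemma inMon_Mo dT dX al be : 0 <= delta eta dT dX -> inK q eta dT dX al be ->
  inMon eta dT dX (Mo eta dT dX al be).
Proof.
move=> delta_ge0 /andP [/orP alA beK]; rewrite /inMon /bideg /Mo !mon_exps.
have deltanE := deltanE delta_ge0.
have al_le : if 0 <= dT then (al <= dX)%N else (eta * al <= deltan eta dT dX)%N.
  case: alA => [|alA]; first by rewrite le_min le_floorA // => /andP [].
  by move: alA; rewrite eqA_nat //; case: ifP => _ /eqP ->.
move: al_le beK deltanE; rewrite xpair_eqE /delta; case: ifP; nia.
Qed.

Lemma inMon_bideg m : inMon eta (bideg eta m).1 (bideg eta m).2 m.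
Proof. by rewrite /inMon -surjective_pairing. Qed.

Lemma inDeltaStarE dT dX m : 0 <= delta eta dT dX ->
  inDeltaStar q eta dT dX m <-> inMon eta dT dX m /\ standard m.
Proof.
move=> delta_ge0; split => [[al [be [alK ->]]] | [mM std]].
  have mM := inMon_Mo delta_ge0 (andP alK).1.
  by split; rewrite // -(inKstar_inMon mM) /Mo !mon_exps.
by exists (eX2 m), (eT2 m); rewrite inKstar_inMon // Mo_inMon.
Qed.

Lemma DeltaStar_standard m :
  (exists dT dX, 0 <= delta eta dT dX /\ inDeltaStar q eta dT dX m) <->
  standard m.
Proof.
split => [[dT [dX [delta_ge0 /(inDeltaStarE _ delta_ge0) []]]] // | std].
have mM := inMon_bideg m.
exists (bideg eta m).1, (bideg eta m).2; rewrite (delta_inMon mM).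
by split=> //; apply/inDeltaStarE; rewrite ?(delta_inMon mM).
Qed.

Lemma standard_dvd l m : mdivides l m -> standard m -> standard l.
Proof.
move=> /forallP l_dvd_m; rewrite /standard /eT1 /eT2 /eX1 /eX2.
have := l_dvd_m (inord 0); have := l_dvd_m (inord 1).
have := l_dvd_m (inord 2); have := l_dvd_m (inord 3); lia.
Qed.

End DeltaStar.

Lemma mlt_asym m1 m2 : mlt m1 m2 -> ~~ mlt m2 m1.
Proof. rewrite /mlt; lia. Qed.

Section Leading.
Variable F : finFieldType.

Lemma is_lead_uniq (g : {mpoly F[4]}) l1 l2 : is_lead g l1 -> is_lead g l2 -> l1 = l2.
Proof.
move=> [l1g lt1] [l2g lt2]; case: (eqVneq l1 l2) => // ne.
by have := mlt_asym (lt2 _ l1g ne); rewrite lt1 // eq_sym.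
Qed.

Lemma is_lead_Xsub (m : 'X_{1..4}) (P : {mpoly F[4]}) :
  {in msupp P, forall k, mlt k m} -> is_lead ('X_[m] - P) m.
Proof.
move=> P_below; have mNP : m \notin msupp P.
  by apply/negP => /P_below mm; have := mlt_asym mm; rewrite mm.
split=> [|k].
  move: mNP; rewrite !mcoeff_msupp mcoeffB mcoeffX eqxx negbK => /eqP ->.
  by rewrite subr0 oner_neq0.
by move=> /msuppB_le; rewrite mem_cat msuppX inE => /orP [/eqP -> /eqP | /P_below].
Qed.

Lemma msupp_X3 (a b c k : 'X_{1..4}) :
  k \in msupp ('X_[a] + 'X_[b] - 'X_[c] : {mpoly F[4]}) -> k \in [:: a; b; c].
Proof.
move=> /msuppB_le; rewrite mem_cat msuppX => /orP [/msuppD_le | kc].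
  by rewrite mem_cat !msuppX !inE => /orP [] ->; rewrite ?orbT.
by move: kc; rewrite !inE => ->; rewrite !orbT.
Qed.

End Leading.

Section Reduction.
Variables (q eta : nat) (F : finFieldType).
Hypothesis q_gt1 : (1 < q)%N.

Lemma red_le n : (0 < n)%N -> (red q n <= n)%N.
Proof. by move=> n_gt0; have := leq_mod (n - 1) (q - 1); rewrite /red; lia. Qed.

Lemma red_lt n : (red q n < q)%N.
Proof. by have := @ltn_pmod (n - 1) (q - 1); rewrite /red; lia. Qed.

Lemma mlt_Mo_X2 dT dX m r s : inMon eta dT dX m -> (r < eX2 m)%N ->
  mlt (Mo eta dT dX r s) m.
Proof. by move=> /inMonE [_ ->]; rewrite /mlt /Mo !mon_exps; lia. Qed.

Lemma mlt_Mo_T2 dT dX m s : inMon eta dT dX m -> (s < eT2 m)%N ->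
  mlt (Mo eta dT dX (eX2 m) s) m.
Proof. by move=> /inMonE [_ ->]; rewrite /mlt /Mo !mon_exps; lia. Qed.

Lemma p_d_le dT dX d : (p_d q eta dT dX d <= d)%N.
Proof. by rewrite /p_d; case: ifP => // /norP [d_gt0 _]; rewrite red_le ?lt0n. Qed.

Lemma p_d_fixed dT dX d : p_d q eta dT dX d = d ->
  [|| d == 0%N, d%:R == A eta dT dX | (d < q)%N].
Proof. by rewrite /p_d; case: ifP => [/orP [] -> | _ <-]; rewrite ?red_lt ?orbT. Qed.

Lemma pi_special_below dT dX m : inMon eta dT dX m ->
  condH q eta dT dX && ((eX2 m)%:R == A eta dT dX) && (eT2 m == 0%N) ->
  {in msupp (Defs.pi q eta F dT dX (eX2 m) (eT2 m)), forall k, mlt k m}.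
Proof.
move=> mM special; rewrite /Defs.pi special => k /msupp_X3.
move: special; rewrite condH_A_inMon //.
move=> /and5P [eta_ge2 /eqP eT1_0 /eqP eT2_0 _ q_le].
have r_lt : (red q (deltan eta dT dX %/ eta) < eX2 m)%N.
  rewrite /deltan (delta_inMon mM) eT1_0 eT2_0 /= mulKn; last by lia.
  by have := red_lt (eX2 m); lia.
by rewrite !inE => /or3P [] /eqP ->; apply: mlt_Mo_X2.
Qed.

Lemma pi_generic_below dT dX m :
  inMon eta dT dX m -> ~~ standard q eta m ->
  ~~ (condH q eta dT dX && ((eX2 m)%:R == A eta dT dX) && (eT2 m == 0%N)) ->
  {in msupp (Defs.pi q eta F dT dX (eX2 m) (eT2 m)), forall k, mlt k m}.
Proof.
move=> mM nstd generic; rewrite /Defs.pi (negbTE generic) => k.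
rewrite msuppX inE => /eqP ->.
have [|d_ge] := ltnP (p_d q eta dT dX (eX2 m)) (eX2 m); first exact: mlt_Mo_X2.
have d_fix : p_d q eta dT dX (eX2 m) = eX2 m by apply/eqP; rewrite eqn_leq p_d_le.
have nstd_c : ~~ [|| eT2 m == 0%N, eT1 m == 0%N | (eT2 m < q)%N].
  move: nstd generic (p_d_fixed d_fix).
  by rewrite /standard condH_A_inMon // eqA_inMon //; lia.
rewrite /p_c d_fix; case: ifP => [c2_0 | _]; first by rewrite c2_0 in nstd_c.
case: ifP => [c2_max | _].
  by move: c2_max nstd_c; rewrite (delta_inMon mM); lia.
by apply: mlt_Mo_T2 => //; have := red_lt (eT2 m); lia.
Qed.

Lemma pi_below dT dX m :
  inMon eta dT dX m -> ~~ standard q eta m ->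
  {in msupp (Defs.pi q eta F dT dX (eX2 m) (eT2 m)), forall k, mlt k m}.
Proof.
move=> mM nstd.
case: (boolP (condH q eta dT dX && ((eX2 m)%:R == A eta dT dX) && (eT2 m == 0%N))).
  exact: pi_special_below.
exact: pi_generic_below.
Qed.

End Reduction.

Section Generators.
Variables (F : finFieldType) (q eta : nat).
Hypothesis q_gt1 : (1 < q)%N.

Lemma inG_lead_nonstandard (g : {mpoly F[4]}) l :
  inG q eta g -> is_lead g l -> ~~ standard q eta l.
Proof.
move=> [dT [dX [m [delta_ge0 mM mND ->]]]] lead_l.
have nstd : ~~ standard q eta m.
  by apply/negP => std; apply: mND; apply/inDeltaStarE.
by rewrite (is_lead_uniq lead_l (is_lead_Xsub (pi_below q_gt1 mM nstd))).
Qed.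

Lemma nonstandard_lead_inG m : ~~ standard q eta m ->
  exists g : {mpoly F[4]}, inG q eta g /\ is_lead g m.
Proof.
move=> nstd; have mM := inMon_bideg eta m.
have delta_ge0 : 0 <= delta eta (bideg eta m).1 (bideg eta m).2.
  by rewrite (delta_inMon mM).
exists ('X_[m] - Defs.pi q eta F (bideg eta m).1 (bideg eta m).2 (eX2 m) (eT2 m)).
split; last exact: is_lead_Xsub (pi_below q_gt1 mM nstd).
exists (bideg eta m).1, (bideg eta m).2, m; split=> //.
by move/(inDeltaStarE _ _ delta_ge0) => [_ std]; rewrite std in nstd.
Qed.

End Generators.

Theorem lemma3p9 (F : finFieldType) (eta : nat) (m : 'X_{1..4}) :
  (exists (dT : int) (dX : nat),
      0 <= delta eta dT dX /\ inDeltaStar #|F| eta dT dX m)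
  <->
  ~ (exists (g : {mpoly F[4]}) (l : 'X_{1..4}),
        [/\ inG #|F| eta g, is_lead g l & mdivides l m]).
Proof.
have q_gt1 : (1 < #|F|)%N := card_finNzRing_gt1 F.
split=> [/DeltaStar_standard std [g [l [gG lead_l l_dvd_m]]] | no_lead].
  by have := inG_lead_nonstandard q_gt1 gG lead_l; rewrite (standard_dvd l_dvd_m std).
apply/DeltaStar_standard; apply/negPn/negP => nstd.
have [g [gG lead_m]] := nonstandard_lead_inG F q_gt1 nstd.
by apply: no_lead; exists g, m; split=> //; apply/forallP.
Qed.
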